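(* Let $m>5$ and let $\lambda=(\boldsymbol\lambda_1,\ldots,\boldsymbol\lambda_m)$ be a real characteristic matrix on $C^3(m)^*$. Then $\lambda$ is decomposable, i.e. there exists $k$ with $2<k<m-1$ such that $\det(\boldsymbol\lambda_1,\boldsymbol\lambda_k,\boldsymbol\lambda_m)=1$ in $\mathbb{Z}/2$.
   Context: $C^3(m)^*$ is the dual of the cyclic $3$-polytope with $m$ vertices, a simple $3$-polytope with facets $F_1,\ldots,F_m$ labeled so that three facets $F_{i_1},F_{i_2},F_{i_3}$ meet at a vertex iff $\{i_1,i_2,i_3\}$ is $\{1,i,i+1\}$ for some $2\le i\le m-1$ or $\{i,i+1,m\}$ for some $1\le i\le m-2$. A real characteristic matrix on it is a $3\times m$ matrix over $\mathbb{Z}/2$ such that $\det(\boldsymbol\lambda_{i_1},\boldsymbol\lambda_{i_2},\boldsymbol\lambda_{i_3})=1$ whenever $F_{i_1},F_{i_2},F_{i_3}$ meet at a vertex. *)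

From mathcomp Require Import all_boot all_algebra.
Set Implicit Arguments. Unset Strict Implicit. Unset Printing Implicit Defensive.
Import GRing.Theory.
Local Open Scope ring_scope.

(* Facets of C^3(m)^* are F_1..F_m (1-based); facet F_i corresponds to column
   index i-1 (an element of 'I_m) of a 3 x m matrix over Z/2 = 'F_2. *)

(* lambda_i as a column vector, for 1 <= i <= m (0 outside this range; never
   used there). *)
Definition lamv (m : nat) (lam : 'M['F_2]_(3, m)) (i : nat) : 'cV['F_2]_3 :=
  \col_r (if @insub _ (fun j => j < m)%N _ i.-1 is Some j then lam r j else 0).

Definition det3 (m : nat) (lam : 'M['F_2]_(3, m)) (i1 i2 i3 : nat) : 'F_2 :=
  \det (\matrix_(r < 3, c < 3)
          (lamv lam (nth 0%N [:: i1; i2; i3] c)) r ord0).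

Definition same_set3 (i1 i2 i3 a b c : nat) : bool :=
  perm_eq [:: i1; i2; i3] [:: a; b; c].

Definition vertex_triple (m i1 i2 i3 : nat) : Prop :=
  (exists i, (2 <= i <= m - 1)%N /\ same_set3 i1 i2 i3 1 i i.+1)
  \/ (exists i, (1 <= i <= m - 2)%N /\ same_set3 i1 i2 i3 i i.+1 m).

Definition real_char_matrix (m : nat) (lam : 'M['F_2]_(3, m)) : Prop :=
  forall i1 i2 i3 : nat, vertex_triple m i1 i2 i3 -> det3 lam i1 i2 i3 = 1.

From mathcomp Require Import all_boot all_algebra ring zify.
Set Implicit Arguments.
Unset Strict Implicit.
Unset Printing Implicit Defensive.

Local Open Scope ring_scope.
Import GRing.Theory.

(* For vectors c, d, e, a, x of a 3-dimensional space, Cramer's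
   rule x = (|x d e| c + |c x e| d + |c d x| e) / |c d e|, plugged into the
   linear form v |-> |a v e| (which kills e), gives
     |c d e| |a x e| = |x d e| |a c e| + |c x e| |a d e|.
   The facets 3, 4, m and 1, m-1, m of C^3(m)^* meet at vertices, so with
   (c, d, e, a, x) = (l_3, l_4, l_m, l_1, l_(m-1)) the left side is 1, whence
   |l_1 l_3 l_m| = 1 or |l_1 l_4 l_m| = 1. *)

Definition det_cols (R : comPzRingType) (u v w : 'cV[R]_3) : R :=
  \det (\matrix_(r < 3, c < 3) (nth 0 [:: u; v; w] c) r ord0).

Lemma det_mx33 (R : comPzRingType) (A : 'M[R]_3) : \det A =
  A 0 0 * (A 1 1 * A 2 2 - A 1 2 * A 2 1)
  - A 0 1 * (A 1 0 * A 2 2 - A 1 2 * A 2 0)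
  + A 0 2 * (A 1 0 * A 2 1 - A 1 1 * A 2 0).
Proof.
have -> : A = \matrix_(i, j) A (inord i) (inord j).
  by apply/matrixP => i j; rewrite mxE !inord_val.
rewrite (expand_det_row _ 0) !big_ord_recr big_ord0 /= /cofactor.
rewrite !(expand_det_row _ 0) !big_ord_recr !big_ord0 /= /cofactor.
rewrite !det_mx11 !mxE /= !expr0 !expr1 ?expr2.
rewrite /bump /= ?modn_small // !(addn0, add0n) (_ : (1 + 1 = 2)%N) //.
ring.
Qed.

Lemma det_colsE (R : comPzRingType) (u v w : 'cV[R]_3) : det_cols u v w =
  u 0 0 * (v 1 0 * w 2 0 - w 1 0 * v 2 0)
  - v 0 0 * (u 1 0 * w 2 0 - w 1 0 * u 2 0)
  + w 0 0 * (u 1 0 * v 2 0 - v 1 0 * u 2 0).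
Proof. by rewrite /det_cols det_mx33 !mxE. Qed.

Lemma det_cols_exchange (R : comPzRingType) (a c d e x : 'cV[R]_3) :
  det_cols c d e * det_cols a x e =
  det_cols x d e * det_cols a c e + det_cols c x e * det_cols a d e.
Proof. rewrite !det_colsE; ring. Qed.

Lemma det_cols_exchange_neq0 (R : idomainType) (a c d e x : 'cV[R]_3) :
  det_cols c d e != 0 -> det_cols a x e != 0 ->
  (det_cols a c e != 0) || (det_cols a d e != 0).
Proof.
move=> cde_neq0 axe_neq0; apply: contraTT (mulf_neq0 cde_neq0 axe_neq0).
by rewrite negb_or !negbK det_cols_exchange => /andP[/eqP-> /eqP->]; rewrite !mulr0 addr0.
Qed.

Lemma F2_neq0_eq1 (z : 'F_2) : z != 0 -> z = 1.
Proof. by case: z => [[|[|n]] //] lt_z2 _; apply: val_inj. Qed.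

Lemma det3_cols m (lam : 'M['F_2]_(3, m)) i j k :
  det3 lam i j k = det_cols (lamv lam i) (lamv lam j) (lamv lam k).
Proof.
rewrite /det3 /det_cols; congr (\det _).
by apply/matrixP => r [[|[|[|c]]] lt_c3]; rewrite !mxE.
Qed.

Lemma real_char_det_first m (lam : 'M['F_2]_(3, m)) i :
  real_char_matrix lam -> (2 <= i <= m - 1)%N -> det3 lam 1 i i.+1 = 1.
Proof.
by move=> lam_char i_range; apply: lam_char; left; exists i; split; last exact: perm_refl.
Qed.

Lemma real_char_det_last m (lam : 'M['F_2]_(3, m)) i :
  real_char_matrix lam -> (1 <= i <= m - 2)%N -> det3 lam i i.+1 m = 1.
Proof.
by move=> lam_char i_range; apply: lam_char; right; exists i; split; last exact: perm_refl.
Qed.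

Theorem lemma5p13 (m : nat) (lam : 'M['F_2]_(3, m)) :
  (5 < m)%N -> real_char_matrix lam ->
  exists k : nat, (2 < k < m - 1)%N /\ det3 lam 1 k m = 1.
Proof.
move=> m_gt5 lam_char.
have det_34m : det3 lam 3 4 m = 1 by apply: real_char_det_last lam_char _; lia.
have det_1m'm : det3 lam 1 (m - 1) m = 1.
  have := real_char_det_first (i := (m - 1)%N) lam_char.
  have -> : (m - 1).+1 = m by lia.
  by apply; lia.
have := @det_cols_exchange_neq0 _ (lamv lam 1) (lamv lam 3) (lamv lam 4)
  (lamv lam m) (lamv lam (m - 1)).
rewrite -!det3_cols det_34m det_1m'm => /(_ (oner_neq0 _) (oner_neq0 _)).
case/orP=> [/F2_neq0_eq1 det_13m | /F2_neq0_eq1 det_14m].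
- by exists 3%N; split; first lia.
- by exists 4%N; split; first lia.
Qed.
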